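(* Let $\mu>0$ and let $X\sim\mathcal N(0,\sigma_X^2)$, $Y\sim\mathcal N(0,\sigma_Y^2)$ be independent with $\sigma_X^2+\sigma_Y^2>0$. Then $$\mathbb E\Big[\Big(1-\tanh^2\Big(\frac{X+Y}{\mu}\Big)\Big)X^2\mathbf 1_{\{X+Y>0\}}\Big]\le\frac1{\sqrt{2\pi}}\frac{\mu\sigma_X^2\sigma_Y^2}{(\sigma_X^2+\sigma_Y^2)^{3/2}}+\frac3{4\sqrt{2\pi}}\frac{\sigma_X^2\mu^3}{(\sigma_X^2+\sigma_Y^2)^{5/2}}(3\mu^2+4\sigma_X^2).$$ *)

From Stdlib Require Import Reals.
Open Scope R_scope.

Definition improper_int (f : R -> R) (l : R) : Prop :=
  (forall a b : R, exists pr : Riemann_integrable f a b, True) /\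
  (forall eps : R, 0 < eps -> exists M : R,
     forall (a b : R) (pr : Riemann_integrable f a b),
       a <= - M -> M <= b -> Rabs (RiemannInt pr - l) < eps).

Definition gauss_density (s2 x : R) : R :=
  exp (- (x ^ 2) / (2 * s2)) / sqrt (2 * PI * s2).

(* gauss_expect s2 f E : E = E[f(Z)] for Z ~ N(0, s2), s2 >= 0.
   For s2 = 0 the law is the Dirac mass at 0. *)
Definition gauss_expect (s2 : R) (f : R -> R) (E : R) : Prop :=
  (s2 = 0 /\ E = f 0) \/
  (0 < s2 /\ improper_int (fun x => f x * gauss_density s2 x) E).

Definition integrand (mu x y : R) : R :=
  (1 - (tanh ((x + y) / mu)) ^ 2) * x ^ 2 * (if Rlt_dec 0 (x + y) then 1 else 0).

From Stdlib Require Import Reals Lra Psatz.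
From Coquelicot Require Import Coquelicot.
Open Scope R_scope.

(* Write phi_v for the N(0, v) density, a = sX2, b = sY2. With t = x + y the inner
   expectation is x^2 times the integral of sech^2(t/mu) phi_b(t - x) over t > 0.
   Integrating against phi_a(x) and exchanging the integrals, the product formula
   phi_a(x) phi_b(t - x) = phi_(a+b)(t) phi_(ab/(a+b))(x - a t/(a+b)) turns the
   x-integral into a second moment, at most ab/(a+b) + (a/(a+b))^2 t^2, and
   phi_(a+b)(t) <= phi_(a+b)(0). Since the integral of sech^2(t/mu) over t > 0 is mu,
   and that of sech^2(t/mu) t^2 is at most that of 4 exp(-2t/mu) t^2, which is mu^3,
   the expectation is at most phi_(a+b)(0) (ab/(a+b) mu + (a/(a+b))^2 mu^3), which
   is below the stated bound.
   All integrals are Riemann integrals over compact windows: the t-integral is cut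
   at T, and its tail, at most phi_b(0) mu (1 - tanh(T/mu)), vanishes as T grows.
   That the Gaussian mass of any window is at most 1 follows from the classical
   identity (int_0^t exp(-x^2))^2 + int_0^1 exp(-t^2 (1+u^2))/(1+u^2) du = pi/4. *)

(* sech^2 written through exponentials, so that [auto_derive] handles it. *)
Definition sech2 (u : R) : R := 4 / (exp u + exp (- u)) ^ 2.

Lemma exp_sum_pos u : 0 < exp u + exp (- u).
Proof. pose proof (exp_pos u); pose proof (exp_pos (- u)); lra. Qed.

Lemma exp_mul_exp_opp u : exp u * exp (- u) = 1.
Proof. rewrite <- exp_plus, Rplus_opp_r; apply exp_0. Qed.

Lemma exp_le_exp x y : x <= y -> exp x <= exp y.
Proof. intros [Hlt|Heq]; [left; apply exp_increasing, Hlt|right; rewrite Heq; reflexivity]. Qed.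

Lemma continuous_of_ex_derive (f : R -> R) x : ex_derive f x -> continuous f x.
Proof. apply (@ex_derive_continuous R_AbsRing R_NormedModule). Qed.

(* Continuity through differentiability; the only side conditions left by
   [auto_derive] are the denominators [(exp u + exp (- u)) ^ 2 <> 0]. *)
Ltac smooth :=
  apply continuous_of_ex_derive; unfold sech2, gauss_density; auto_derive;
  repeat split; auto;
  repeat match goal with
  | |- context [exp ?u + exp (- ?u)] =>
      lazymatch goal with
      | _ : 0 < exp u + exp (- u) |- _ => fail
      | _ => pose proof (exp_sum_pos u)
      end
  end;
  apply Rgt_not_eq; nra.

Lemma tanh_exp u : tanh u = (exp u - exp (- u)) / (exp u + exp (- u)).
Proof. unfold tanh, sinh, cosh; pose proof (exp_sum_pos u); field; lra. Qed.

Lemma tanh_0 : tanh 0 = 0.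
Proof. rewrite tanh_exp, Ropp_0, Rminus_diag; apply Rdiv_0_l. Qed.

Lemma one_sub_tanh_sqr u : 1 - tanh u ^ 2 = sech2 u.
Proof.
  rewrite tanh_exp; unfold sech2.
  pose proof (exp_sum_pos u); rewrite exp_Ropp in *; pose proof (exp_pos u).
  field; nra.
Qed.

Lemma sech2_pos u : 0 < sech2 u.
Proof. unfold sech2; pose proof (exp_sum_pos u); apply Rdiv_lt_0_compat; nra. Qed.

Lemma sech2_le_exp u : sech2 u <= 4 * exp (- (2 * u)).
Proof.
  replace (- (2 * u)) with (- u + - u) by ring; rewrite exp_plus.
  unfold sech2; pose proof (exp_mul_exp_opp u); pose proof (exp_pos (- u)).
  apply Rle_div_l; [pose proof (exp_sum_pos u); nra|].
  nra.
Qed.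

Lemma is_derive_tanh u : is_derive tanh u (sech2 u).
Proof.
  eapply is_derive_ext; [intros t; symmetry; apply tanh_exp|].
  pose proof (exp_sum_pos u); pose proof (exp_pos u).
  auto_derive; [lra|]. unfold sech2; rewrite exp_Ropp in *; field; nra.
Qed.

Lemma tanh_le_1 u : tanh u <= 1.
Proof.
  rewrite tanh_exp; pose proof (exp_sum_pos u); pose proof (exp_pos (- u)).
  apply Rle_div_l; lra.
Qed.

Lemma one_sub_tanh_le u : 0 <= u -> 1 - tanh u <= 1 / (1 + u).
Proof.
  intros Hu; pose proof (exp_pos u).
  assert (Hexp : 1 + 2 * u <= exp u * exp u).
  { rewrite <- exp_plus; replace (u + u) with (2 * u) by ring; apply exp_ineq1_le. }
  replace (1 - tanh u) with (2 / (exp u * exp u + 1))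
    by (rewrite tanh_exp, exp_Ropp; field; nra).
  replace (1 / (1 + u)) with (2 / (2 + 2 * u)) by (field; lra).
  apply Rmult_le_compat_l; [lra|]. apply Rinv_le_contravar; lra.
Qed.

Lemma ex_RInt_of_continuous (f : R -> R) a b :
  (forall z, continuous f z) -> ex_RInt f a b.
Proof. intros Hf; apply (@ex_RInt_continuous R_CompleteNormedModule); auto. Qed.

Ltac ex_RInt_smooth := apply ex_RInt_of_continuous; intros; smooth.

(* Coquelicot states its integration lemmas in a normed module, with [plus]
   and [scal]; their instances on [R] below are written with [+] and [*] and with
   an equality at type [R], so that they rewrite and feed [ring] and [lra]. *)
Lemma RInt_ext_R (f g : R -> R) a b :
  (forall x, Rmin a b < x < Rmax a b -> f x = g x) -> (RInt f a b : R) = RInt g a b.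
Proof. exact (@RInt_ext R_CompleteNormedModule f g a b). Qed.

Lemma RInt_plus_R (f g : R -> R) a b : ex_RInt f a b -> ex_RInt g a b ->
  (RInt (fun x => f x + g x) a b : R) = RInt f a b + RInt g a b.
Proof. exact (@RInt_plus R_CompleteNormedModule f g a b). Qed.

Lemma RInt_minus_R (f g : R -> R) a b : ex_RInt f a b -> ex_RInt g a b ->
  (RInt (fun x => f x - g x) a b : R) = RInt f a b - RInt g a b.
Proof. exact (@RInt_minus R_CompleteNormedModule f g a b). Qed.

Lemma RInt_scal_R (f : R -> R) a b k : ex_RInt f a b ->
  (RInt (fun x => k * f x) a b : R) = k * RInt f a b.
Proof. exact (@RInt_scal R_CompleteNormedModule f a b k). Qed.

Lemma RInt_Chasles_R (f : R -> R) a b c : ex_RInt f a b -> ex_RInt f b c ->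
  (RInt f a b + RInt f b c : R) = RInt f a c.
Proof. exact (@RInt_Chasles R_CompleteNormedModule f a b c). Qed.

Lemma RInt_comp_lin_R (f : R -> R) u v a b : ex_RInt f (u * a + v) (u * b + v) ->
  (RInt (fun y => u * f (u * y + v)) a b : R) = RInt f (u * a + v) (u * b + v).
Proof. exact (@RInt_comp_lin R_CompleteNormedModule f u v a b). Qed.

Lemma RInt_point_R (f : R -> R) a : (RInt f a a : R) = 0.
Proof. exact (@RInt_point R_CompleteNormedModule a f). Qed.

Lemma RInt_0_R a b : (RInt (fun _ => 0) a b : R) = 0.
Proof. rewrite RInt_const; apply Rmult_0_r. Qed.

Lemma RInt_derive_R (F f : R -> R) a b :
  (forall x, is_derive F x (f x)) -> (forall x, continuous f x) ->
  (RInt f a b : R) = F b - F a.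
Proof.
  intros HF Hf; apply is_RInt_unique.
  apply (@is_RInt_derive R_CompleteNormedModule); auto.
Qed.

Lemma is_derive_RInt_R (f : R -> R) a t :
  (forall z, continuous f z) -> is_derive (fun t => RInt f a t) t (f t).
Proof.
  intros Hf; apply (@is_derive_RInt R_CompleteNormedModule f _ a t); auto.
  apply filter_forall; intros; apply (@RInt_correct R_CompleteNormedModule).
  apply ex_RInt_of_continuous; auto.
Qed.

Lemma RInt_le_R (f g : R -> R) a b : a <= b ->
  (forall z, continuous f z) -> (forall z, continuous g z) ->
  (forall x, a <= x <= b -> f x <= g x) -> RInt f a b <= RInt g a b.
Proof.
  intros Hab Hf Hg Hfg; apply RInt_le; auto using ex_RInt_of_continuous.
  intros; apply Hfg; lra.
Qed.

Lemma RInt_ge_0_R (f : R -> R) a b : a <= b ->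
  (forall z, continuous f z) -> (forall x, 0 <= f x) -> 0 <= RInt f a b.
Proof. intros Hab Hf Hpos; apply RInt_ge_0; auto using ex_RInt_of_continuous. Qed.

Lemma RInt_le_window (f : R -> R) A C A' C' :
  (forall z, continuous f z) -> (forall x, 0 <= f x) ->
  A' <= A -> A <= C -> C <= C' -> RInt f A C <= RInt f A' C'.
Proof.
  intros Hf Hpos H1 H2 H3.
  assert (Hex : forall a b, ex_RInt f a b) by auto using ex_RInt_of_continuous.
  rewrite <- (RInt_Chasles_R f A' A C'), <- (RInt_Chasles_R f A C C') by auto.
  pose proof (RInt_ge_0_R f A' A H1 Hf Hpos); pose proof (RInt_ge_0_R f C C' H3 Hf Hpos).
  lra.
Qed.

Lemma RInt_split_at (f g : R -> R) c D : - D <= c <= D -> ex_RInt f (- D) D ->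
  (forall y, y < c -> f y = 0) -> (forall y, c < y -> f y = g y) ->
  (RInt f (- D) D : R) = RInt g c D.
Proof.
  intros Hc Hex Hlow Hhigh.
  rewrite <- (RInt_Chasles_R f (- D) c D).
  - rewrite (RInt_ext_R f (fun _ => 0) (- D) c), RInt_0_R, Rplus_0_l.
    + apply RInt_ext_R; intros y Hy; rewrite Rmin_left, Rmax_right in Hy by lra; apply Hhigh; lra.
    + intros y Hy; rewrite Rmin_left, Rmax_right in Hy by lra; apply Hlow; lra.
  - apply (ex_RInt_Chasles_1 f (- D) c D); auto.
  - apply (ex_RInt_Chasles_2 f (- D) c D); auto.
Qed.

Lemma improper_int_le (f : R -> R) l K B0 : improper_int f l ->
  (forall B, B0 <= B -> RInt f (- B) B <= K) -> l <= K.
Proof.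
  intros [Hint Hlim] HK.
  apply Rnot_lt_le; intros HlK.
  destruct (Hlim (l - K)) as [M HM]; [lra|].
  set (B := Rmax B0 (Rabs M)).
  assert (HB0 : B0 <= B) by apply Rmax_l.
  assert (HM' : Rabs M <= B) by apply Rmax_r.
  destruct (Hint (- B) B) as [pr _].
  specialize (HM (- B) B pr).
  rewrite <- RInt_Reals in HM.
  pose proof (Rle_abs M); pose proof (Rle_abs (- M)); rewrite Rabs_Ropp in *.
  specialize (HK B HB0).
  apply Rabs_def2 in HM; lra.
Qed.

Lemma ex_RInt_of_improper_int (f : R -> R) l a b : improper_int f l -> ex_RInt f a b.
Proof. intros [Hint _]; destruct (Hint a b) as [pr _]; apply ex_RInt_Reals_1, pr. Qed.

Lemma RInt_sech2 mu A C : 0 < mu ->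
  (RInt (fun t => sech2 (t / mu)) A C : R) = mu * (tanh (C / mu) - tanh (A / mu)).
Proof.
  intros Hmu.
  rewrite (RInt_derive_R (fun t => mu * tanh (t / mu))); [ring| |intros; smooth].
  intros x.
  replace (sech2 (x / mu)) with (mu * (1 / mu * sech2 (x / mu))) by (field; lra).
  apply (is_derive_scal (fun t => tanh (t / mu))).
  apply (is_derive_comp tanh (fun t => t / mu)); [apply is_derive_tanh|].
  auto_derive; auto; field; lra.
Qed.

Lemma RInt_sech2_le mu A C : 0 < mu -> A <= C ->
  RInt (fun t => sech2 (t / mu)) A C <= mu * (1 - tanh (A / mu)).
Proof.
  intros Hmu HAC; rewrite RInt_sech2 by auto.
  apply Rmult_le_compat_l; [lra|]; pose proof (tanh_le_1 (C / mu)); lra.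
Qed.

Lemma RInt_sech2_sqr_le mu T : 0 < mu -> 0 <= T ->
  RInt (fun t => sech2 (t / mu) * t ^ 2) 0 T <= mu ^ 3.
Proof.
  intros Hmu HT.
  apply Rle_trans with (RInt (fun t => 4 * exp (- (2 * (t / mu))) * t ^ 2) 0 T).
  - apply RInt_le_R; auto; try (intros; smooth).
    intros x _; apply Rmult_le_compat_r; [apply pow2_ge_0|apply sech2_le_exp].
  - set (F := fun t => - exp (- (2 * (t / mu))) * (2 * mu * t ^ 2 + 2 * mu ^ 2 * t + mu ^ 3)).
    rewrite (RInt_derive_R F); [| |intros; smooth].
    + unfold F; replace (2 * (0 / mu)) with 0 by (field; lra); rewrite Ropp_0, exp_0.
      pose proof (exp_pos (- (2 * (T / mu)))).
      assert (0 <= 2 * mu * T ^ 2 + 2 * mu ^ 2 * T) by (pose proof (pow2_ge_0 T); nra).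
      pose proof (pow_lt mu 3 Hmu); nra.
    + intros x; unfold F; auto_derive; auto; set (e := exp _); field; lra.
Qed.

Lemma RInt_sech2_quadratic_le mu T c0 c2 : 0 < mu -> 0 <= T -> 0 <= c0 -> 0 <= c2 ->
  RInt (fun t => sech2 (t / mu) * (c0 + c2 * t ^ 2)) 0 T <= c0 * mu + c2 * mu ^ 3.
Proof.
  intros Hmu HT Hc0 Hc2.
  rewrite (RInt_ext_R _ (fun t => c0 * sech2 (t / mu) + c2 * (sech2 (t / mu) * t ^ 2)))
    by (intros; ring).
  rewrite RInt_plus_R, !RInt_scal_R by ex_RInt_smooth.
  apply Rplus_le_compat; apply Rmult_le_compat_l; auto.
  - eapply Rle_trans; [apply RInt_sech2_le; auto|].
    rewrite Rdiv_0_l, tanh_0; lra.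
  - apply RInt_sech2_sqr_le; auto.
Qed.

(** * Continuity in two variables and Fubini's theorem *)

Lemma continuity_2d_pt_comp (h : R -> R) (f : R -> R -> R) x y :
  continuous h (f x y) -> continuity_2d_pt f x y ->
  continuity_2d_pt (fun u v => h (f u v)) x y.
Proof. intros Hh Hf; apply continuity_1d_2d_pt_comp; [apply continuity_pt_filterlim|]; auto. Qed.

Lemma continuity_2d_pt_fst (h : R -> R) x y :
  continuous h x -> continuity_2d_pt (fun u _ => h u) x y.
Proof. intros; apply (continuity_2d_pt_comp h (fun u _ => u)); auto using continuity_2d_pt_id1. Qed.

Lemma continuity_2d_pt_snd (h : R -> R) x y :
  continuous h y -> continuity_2d_pt (fun _ v => h v) x y.
Proof. intros; apply (continuity_2d_pt_comp h (fun _ v => v)); auto using continuity_2d_pt_id2. Qed.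

Lemma continuity_2d_pt_swap (k : R -> R -> R) x y :
  continuity_2d_pt k x y -> continuity_2d_pt (fun u v => k v u) y x.
Proof. intros Hk eps; destruct (Hk eps) as [d Hd]; exists d; intros u v Hu Hv; apply Hd; auto. Qed.

Lemma continuity_2d_pt_conv_kernel (f s h : R -> R) x t :
  (forall z, continuous f z) -> (forall z, continuous s z) -> (forall z, continuous h z) ->
  continuity_2d_pt (fun x t => f x * (s t * h (t - x))) x t.
Proof.
  intros Hf Hs Hh.
  apply continuity_2d_pt_mult; [apply continuity_2d_pt_fst, Hf|].
  apply continuity_2d_pt_mult; [apply continuity_2d_pt_snd, Hs|].
  apply (continuity_2d_pt_comp h (fun x t => t - x)); auto.
  apply continuity_2d_pt_minus; [apply continuity_2d_pt_id2|apply continuity_2d_pt_id1].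
Qed.

Lemma continuous_of_continuity_2d_pt (k : R -> R -> R) x y :
  continuity_2d_pt k x y -> continuous (fun u => k u y) x.
Proof.
  intros Hk; apply continuity_pt_filterlim.
  intros eps Heps; destruct (Hk (mkposreal eps Heps)) as [d Hd].
  exists d; split; [apply cond_pos|]; intros u [_ Hu]; apply Hd; simpl in *; auto.
  rewrite Rminus_diag, Rabs_R0; apply cond_pos.
Qed.

Lemma continuous_RInt_param (k : R -> R -> R) a b y :
  (forall x y, continuity_2d_pt k x y) ->
  continuous (fun v => RInt (fun x => k x v) a b) y.
Proof.
  intros Hk; apply continuity_pt_filterlim; intros eps Heps.
  assert (Hkx : forall v x, continuous (fun x => k x v) x)
    by (intros; apply continuous_of_continuity_2d_pt, Hk).
  set (w := Rabs (b - a) + 1).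
  assert (Hw : 0 < w) by (unfold w; pose proof (Rabs_pos (b - a)); lra).
  destruct (uniform_continuity_2d_1d k (Rmin a b) (Rmax a b) y (fun x _ => Hk x y)
              (mkposreal (eps / w) (Rdiv_lt_0_compat _ _ Heps Hw))) as [d Hd].
  exists d; split; [apply cond_pos|]; intros v [_ Hv]; simpl in *; unfold R_dist in *.
  rewrite <- RInt_minus_R by (apply ex_RInt_of_continuous; auto).
  apply Rle_lt_trans with (Rabs (b - a) * (eps / w)).
  - apply (@norm_RInt_le_const_abs R_NormedModule (fun x => k x v - k x y) a b).
    + intros x Hx; left; apply (Hd x y x v); auto; try lra.
      * pose proof (cond_pos d); lra.
      * apply Rabs_def2 in Hv; lra.
      * rewrite Rminus_diag, Rabs_R0; apply cond_pos.
    + apply (@RInt_correct R_CompleteNormedModule), ex_RInt_of_continuous; intros z.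
      apply (@continuous_minus R_UniformSpace R_AbsRing R_NormedModule); auto.
  - unfold w; pose proof (Rabs_pos (b - a)).
    apply Rmult_lt_reg_r with w; [lra|]; unfold w; field_simplify; lra.
Qed.

(* As functions of b, both sides vanish at a and have derivative RInt (k b) c d. *)
Lemma RInt_swap_iterated (k : R -> R -> R) a b c d :
  (forall x y, continuity_2d_pt k x y) ->
  (RInt (fun x => RInt (fun t => k x t) c d) a b : R) = RInt (fun t => RInt (fun x => k x t) a b) c d.
Proof.
  intros Hk.
  assert (Hdk : forall u t, is_derive (fun z => RInt (fun x => k x t) a z) u (k u t)).
  { intros u t; apply (is_derive_RInt_R (fun x => k x t)).
    intros; apply continuous_of_continuity_2d_pt, Hk. }
  set (Phi := fun u => RInt (fun t => RInt (fun x => k x t) a u) c d).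
  change ((RInt (fun x => RInt (fun t => k x t) c d) a b : R) = Phi b).
  rewrite (RInt_derive_R Phi).
  - unfold Phi at 2; rewrite (RInt_ext_R _ (fun _ => 0)), RInt_0_R; [ring|].
    intros; apply RInt_point_R.
  - intros u; unfold Phi.
    rewrite (RInt_ext_R (fun t => k u t) (fun t => Derive (fun z => RInt (fun x => k x t) a z) u))
      by (intros; symmetry; apply is_derive_unique, Hdk).
    apply (is_derive_RInt_param (fun z t => RInt (fun x => k x t) a z) c d u).
    + apply filter_forall; intros z t _; eexists; apply Hdk.
    + intros t _; apply continuity_2d_pt_ext with (f := k); [|apply Hk].
      intros x y; symmetry; apply is_derive_unique, Hdk.
    + apply filter_forall; intros z; apply ex_RInt_of_continuous; intros t.
      apply continuous_RInt_param, Hk.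
  - intros u; apply (continuous_RInt_param (fun t x => k x t)).
    intros; apply continuity_2d_pt_swap, Hk.
Qed.

(** * The Gaussian integral *)

Lemma is_derive_zero_const (F : R -> R) :
  (forall t, is_derive F t 0) -> forall t, F t = F 0.
Proof.
  intros HF t; destruct (Rtotal_order t 0) as [Ht|[->|Ht]]; auto.
  - apply (eq_is_derive F t 0); auto.
  - symmetry; apply (eq_is_derive F 0 t); auto.
Qed.

Definition gauss_int (t : R) : R := RInt (fun x => exp (- x ^ 2)) 0 t.

Definition gauss_kernel_int (t : R) : R :=
  RInt (fun u => exp (- (t ^ 2 * (1 + u ^ 2))) / (1 + u ^ 2)) 0 1.

Lemma is_derive_gauss_int t : is_derive gauss_int t (exp (- t ^ 2)).
Proof. apply (is_derive_RInt_R (fun x => exp (- x ^ 2))); intros; smooth. Qed.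

Lemma is_derive_gauss_kernel t u :
  is_derive (fun z => exp (- (z ^ 2 * (1 + u ^ 2))) / (1 + u ^ 2)) t
    (- 2 * t * exp (- (t ^ 2 * (1 + u ^ 2)))).
Proof.
  pose proof (pow2_ge_0 u).
  auto_derive; [lra|]; set (e := exp _); field; lra.
Qed.

Lemma is_derive_gauss_kernel_int t :
  is_derive gauss_kernel_int t (RInt (fun u => - 2 * t * exp (- (t ^ 2 * (1 + u ^ 2)))) 0 1).
Proof.
  erewrite RInt_ext_R.
  2: { intros u _; symmetry; apply is_derive_unique, is_derive_gauss_kernel. }
  apply (is_derive_RInt_param (fun z u => exp (- (z ^ 2 * (1 + u ^ 2))) / (1 + u ^ 2))).
  - apply filter_forall; intros z u _; eexists; apply is_derive_gauss_kernel.
  - intros u _.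
    apply continuity_2d_pt_ext with (f := fun z v => - 2 * z * exp (- (z ^ 2 * (1 + v ^ 2)))).
    { intros z v; symmetry; apply is_derive_unique, is_derive_gauss_kernel. }
    apply continuity_2d_pt_mult; [apply continuity_2d_pt_fst; smooth|].
    apply (continuity_2d_pt_comp exp); [smooth|].
    apply continuity_2d_pt_opp, continuity_2d_pt_mult;
      [apply continuity_2d_pt_fst | apply continuity_2d_pt_snd]; smooth.
  - apply filter_forall; intros z; apply ex_RInt_of_continuous; intros v.
    pose proof (pow2_ge_0 v); apply continuous_of_ex_derive; auto_derive; lra.
Qed.

Lemma gauss_int_scale t : gauss_int t = t * RInt (fun u => exp (- (t * u) ^ 2)) 0 1.
Proof.
  unfold gauss_int.
  rewrite <- RInt_scal_R by ex_RInt_smooth.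
  replace 0 with (t * 0 + 0) at 1 by ring; replace t with (t * 1 + 0) at 2 by ring.
  rewrite <- RInt_comp_lin_R by ex_RInt_smooth.
  apply RInt_ext_R; intros; rewrite Rplus_0_r; reflexivity.
Qed.

(* The derivative of the left side vanishes: by [gauss_int_scale], that of
   [gauss_kernel_int t] is [- 2 exp (- t ^ 2) gauss_int t]. *)
Lemma gauss_int_sqr_add_kernel t : gauss_int t ^ 2 + gauss_kernel_int t = PI / 4.
Proof.
  rewrite (is_derive_zero_const (fun t => gauss_int t ^ 2 + gauss_kernel_int t)).
  - unfold gauss_int, gauss_kernel_int; rewrite RInt_point_R.
    rewrite (RInt_ext_R _ (fun u => / (1 + u ^ 2))).
    2: { intros u _; replace (- (0 ^ 2 * (1 + u ^ 2))) with 0 by ring; rewrite exp_0; field.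
         pose proof (pow2_ge_0 u); lra. }
    rewrite (RInt_derive_R atan).
    + rewrite atan_1, atan_0; ring.
    + intros; apply is_derive_Reals, derivable_pt_lim_atan.
    + intros u; pose proof (pow2_ge_0 u); apply continuous_of_ex_derive; auto_derive; lra.
  - intros s.
    replace 0 with (INR 2 * exp (- s ^ 2) * gauss_int s ^ pred 2
                    + RInt (fun u => - 2 * s * exp (- (s ^ 2 * (1 + u ^ 2)))) 0 1).
    + apply (@is_derive_plus R_AbsRing R_NormedModule);
        [apply is_derive_pow, is_derive_gauss_int | apply is_derive_gauss_kernel_int].
    + rewrite (RInt_ext_R _ (fun u => - 2 * s * exp (- s ^ 2) * exp (- (s * u) ^ 2))).
      2: { intros u _; replace (- (s ^ 2 * (1 + u ^ 2))) with (- s ^ 2 + - (s * u) ^ 2) by ring.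
         rewrite exp_plus; ring. }
      rewrite RInt_scal_R by ex_RInt_smooth.
      rewrite gauss_int_scale; simpl; ring.
Qed.

Lemma Rabs_gauss_int_le t : Rabs (gauss_int t) <= sqrt PI / 2.
Proof.
  pose proof (gauss_int_sqr_add_kernel t) as Hsum.
  assert (Hker : 0 <= gauss_kernel_int t).
  { apply RInt_ge_0_R; [lra| |].
    - intros u; pose proof (pow2_ge_0 u); apply continuous_of_ex_derive; auto_derive; lra.
    - intros u; pose proof (pow2_ge_0 u); pose proof (exp_pos (- (t ^ 2 * (1 + u ^ 2)))).
      apply Rlt_le, Rdiv_lt_0_compat; lra. }
  assert (Hsq : (sqrt PI / 2) ^ 2 = PI / 4).
  { unfold Rdiv; rewrite Rpow_mult_distr, pow2_sqrt by (left; apply PI_RGT_0); field. }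
  pose proof (sqrt_pos PI).
  apply Rabs_le; split; nra.
Qed.

Lemma RInt_gauss a b : (RInt (fun x => exp (- x ^ 2)) a b : R) = gauss_int b - gauss_int a.
Proof. unfold gauss_int; rewrite <- (RInt_Chasles_R _ 0 a b) by ex_RInt_smooth; lra. Qed.

(** * Gaussian densities *)

Lemma sqrt_2_PI_pos v : 0 < v -> 0 < sqrt (2 * PI * v).
Proof. intros; apply sqrt_lt_R0; pose proof PI_RGT_0; nra. Qed.

Lemma gauss_density_pos v x : 0 < v -> 0 < gauss_density v x.
Proof. intros Hv; apply Rdiv_lt_0_compat; [apply exp_pos|apply sqrt_2_PI_pos, Hv]. Qed.

Lemma gauss_density_le_0 v x : 0 < v -> gauss_density v x <= gauss_density v 0.
Proof.
  intros Hv; unfold gauss_density.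
  apply Rmult_le_compat_r; [apply Rlt_le, Rinv_0_lt_compat, sqrt_2_PI_pos, Hv|].
  apply exp_le_exp; unfold Rdiv.
  pose proof (pow2_ge_0 x); pose proof (Rinv_0_lt_compat (2 * v)); nra.
Qed.

Lemma gauss_density_opp v x : gauss_density v (- x) = gauss_density v x.
Proof. unfold gauss_density; do 4 f_equal; ring. Qed.

Lemma RInt_gauss_density_le_1 v m A C : 0 < v ->
  RInt (fun x => gauss_density v (x - m)) A C <= 1.
Proof.
  intros Hv.
  set (c := sqrt (2 * v)).
  assert (Hc : 0 < c) by (apply sqrt_lt_R0; lra).
  assert (Hcc : c * c = 2 * v) by (apply sqrt_sqrt; lra).
  assert (HPI : 0 < sqrt PI) by apply sqrt_lt_R0, PI_RGT_0.
  assert (Hnorm : sqrt (2 * PI * v) = sqrt PI * c)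
    by (unfold c; rewrite <- sqrt_mult by (pose proof PI_RGT_0; lra); f_equal; ring).
  rewrite (RInt_ext_R _ (fun x => / sqrt PI * (/ c * exp (- (/ c * x + - m / c) ^ 2)))).
  2: { intros x _; unfold gauss_density; rewrite Hnorm.
       replace (- (/ c * x + - m / c) ^ 2) with (- (x - m) ^ 2 / (2 * v))
         by (rewrite <- Hcc; field; lra).
       set (e := exp _); field; lra. }
  rewrite RInt_scal_R by ex_RInt_smooth.
  rewrite (RInt_comp_lin_R (fun y => exp (- y ^ 2))) by ex_RInt_smooth.
  rewrite RInt_gauss.
  pose proof (Rabs_gauss_int_le (/ c * A + - m / c)) as HA.
  pose proof (Rabs_gauss_int_le (/ c * C + - m / c)) as HC.
  apply Rabs_le_between in HA; apply Rabs_le_between in HC.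
  apply Rmult_le_reg_l with (sqrt PI); [lra|].
  rewrite <- Rmult_assoc, Rinv_r, Rmult_1_l, Rmult_1_r by lra.
  lra.
Qed.

Lemma RInt_sqr_gauss_density_le v m A C : 0 < v -> A <= C ->
  RInt (fun x => x ^ 2 * gauss_density v (x - m)) A C <= v + m ^ 2.
Proof.
  intros Hv HAC.
  set (L := Rabs (A - m) + Rabs (C - m)).
  pose proof (Rle_abs (A - m)); pose proof (Rle_abs (- (A - m))).
  pose proof (Rle_abs (C - m)); pose proof (Rle_abs (- (C - m))).
  rewrite Rabs_Ropp in *.
  eapply Rle_trans; [apply (RInt_le_window _ A C (m - L) (m + L)); try (intros; smooth); unfold L; try lra|].
  { intros x; apply Rmult_le_pos; [apply pow2_ge_0|apply Rlt_le, gauss_density_pos, Hv]. }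
  (* (x^2 - m^2 - v) phi(x - m) = F'(x), and F(m + L) - F(m - L) = - 2 v L phi(L) <= 0. *)
  set (F := fun x => - v * (x + m) * gauss_density v (x - m)).
  rewrite (RInt_ext_R _ (fun x => (x ^ 2 - m ^ 2 - v) * gauss_density v (x - m)
                                  + (v + m ^ 2) * gauss_density v (x - m))) by (intros; ring).
  rewrite RInt_plus_R, RInt_scal_R by ex_RInt_smooth.
  rewrite (RInt_derive_R F); [| |intros; smooth].
  - unfold F; replace (m - L - m) with (- L) by ring; replace (m + L - m) with L by ring.
    rewrite gauss_density_opp.
    assert (0 <= L) by (unfold L; pose proof (Rabs_pos (A - m)); pose proof (Rabs_pos (C - m)); lra).
    assert (0 <= v * L * gauss_density v L)
      by (pose proof (gauss_density_pos v L Hv); apply Rmult_le_pos; nra).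
    assert ((v + m ^ 2) * RInt (fun x => gauss_density v (x - m)) (m - L) (m + L) <= v + m ^ 2).
    { pose proof (RInt_gauss_density_le_1 v m (m - L) (m + L) Hv); pose proof (pow2_ge_0 m).
      rewrite <- (Rmult_1_r (v + m ^ 2)) at 2; apply Rmult_le_compat_l; lra. }
    lra.
  - intros x; unfold F, gauss_density; pose proof (sqrt_2_PI_pos v Hv).
    auto_derive; [lra|]. set (e := exp _); field; lra.
Qed.

Lemma gauss_density_mul a b x t : 0 < a -> 0 < b ->
  gauss_density a x * gauss_density b (t - x) =
  gauss_density (a + b) t * gauss_density (a * b / (a + b)) (x - a / (a + b) * t).
Proof.
  intros Ha Hb; unfold gauss_density.
  assert (0 < a * b / (a + b)) by (apply Rdiv_lt_0_compat; nra).
  pose proof (sqrt_2_PI_pos a Ha); pose proof (sqrt_2_PI_pos b Hb).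
  pose proof (sqrt_2_PI_pos (a + b)); pose proof (sqrt_2_PI_pos (a * b / (a + b))).
  assert (Hsqrt : sqrt (2 * PI * a) * sqrt (2 * PI * b)
                  = sqrt (2 * PI * (a + b)) * sqrt (2 * PI * (a * b / (a + b)))).
  { pose proof PI_RGT_0; rewrite <- !sqrt_mult by nra; f_equal; field; lra. }
  assert (Hexp : - x ^ 2 / (2 * a) + - (t - x) ^ 2 / (2 * b)
                 = - t ^ 2 / (2 * (a + b)) + - (x - a / (a + b) * t) ^ 2 / (2 * (a * b / (a + b)))).
  { field; lra. }
  replace (exp (- x ^ 2 / (2 * a)) / sqrt (2 * PI * a) * (exp (- (t - x) ^ 2 / (2 * b)) / sqrt (2 * PI * b)))
    with (exp (- x ^ 2 / (2 * a) + - (t - x) ^ 2 / (2 * b)) / (sqrt (2 * PI * a) * sqrt (2 * PI * b)))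
    by (rewrite exp_plus; field; lra).
  rewrite Hexp, Hsqrt, exp_plus; field; lra.
Qed.

Lemma RInt_sqr_gauss_mul_le a b t A C : 0 < a -> 0 < b -> A <= C ->
  RInt (fun x => x ^ 2 * gauss_density a x * gauss_density b (t - x)) A C
  <= gauss_density (a + b) 0 * (a * b / (a + b) + (a / (a + b)) ^ 2 * t ^ 2).
Proof.
  intros Ha Hb HAC.
  rewrite (RInt_ext_R _ (fun x => gauss_density (a + b) t
                                  * (x ^ 2 * gauss_density (a * b / (a + b)) (x - a / (a + b) * t)))).
  2: { intros x _; rewrite Rmult_assoc, gauss_density_mul by auto; ring. }
  rewrite RInt_scal_R by ex_RInt_smooth.
  assert (Hv : 0 < a * b / (a + b)) by (apply Rdiv_lt_0_compat; nra).
  pose proof (RInt_sqr_gauss_density_le _ (a / (a + b) * t) A C Hv HAC).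
  pose proof (gauss_density_le_0 (a + b) t ltac:(lra)).
  pose proof (gauss_density_pos (a + b) t ltac:(lra)).
  pose proof (pow2_ge_0 (a / (a + b) * t)).
  apply Rle_trans with (gauss_density (a + b) t * (a * b / (a + b) + (a / (a + b) * t) ^ 2)).
  - apply Rmult_le_compat_l; lra.
  - rewrite Rpow_mult_distr; apply Rmult_le_compat_r; [rewrite <- Rpow_mult_distr|]; lra.
Qed.

Lemma integrand_eq_0 mu x y : x + y <= 0 -> integrand mu x y = 0.
Proof. intros Hxy; unfold integrand; destruct (Rlt_dec 0 (x + y)); [lra|ring]. Qed.

Lemma integrand_eq_sech2 mu x y : 0 < x + y -> integrand mu x y = x ^ 2 * sech2 ((x + y) / mu).
Proof.
  intros Hxy; unfold integrand; rewrite one_sub_tanh_sqr.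
  destruct (Rlt_dec 0 (x + y)); [ring|lra].
Qed.

Definition sech2_moment_bound (mu a b : R) : R :=
  gauss_density (a + b) 0 * (a * b / (a + b) * mu + (a / (a + b)) ^ 2 * mu ^ 3).

Lemma RInt_sech2_gauss_le mu b x T S : 0 < mu -> 0 < b -> T <= S ->
  RInt (fun t => sech2 (t / mu) * gauss_density b (t - x)) T S
  <= gauss_density b 0 * mu * (1 - tanh (T / mu)).
Proof.
  intros Hmu Hb HTS.
  apply Rle_trans with (RInt (fun t => gauss_density b 0 * sech2 (t / mu)) T S).
  - apply RInt_le_R; auto; try (intros; smooth).
    intros t _; rewrite Rmult_comm; apply Rmult_le_compat_r;
      [apply Rlt_le, sech2_pos|apply gauss_density_le_0, Hb].
  - rewrite RInt_scal_R, Rmult_assoc by ex_RInt_smooth.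
    apply Rmult_le_compat_l; [apply Rlt_le, gauss_density_pos, Hb|apply RInt_sech2_le; auto].
Qed.

(* With t = x + y the window [- D, D] becomes [0, x + D], cut at T; the tail is
   at most gauss_density b 0 times the integral of sech2 over [T, +oo). *)
Lemma inner_expectation_le mu b x gx T : 0 < mu -> 0 < b -> 0 <= T ->
  improper_int (fun y => integrand mu x y * gauss_density b y) gx ->
  gx <= x ^ 2 * (RInt (fun t => sech2 (t / mu) * gauss_density b (t - x)) 0 T
                 + gauss_density b 0 * mu * (1 - tanh (T / mu))).
Proof.
  intros Hmu Hb HT Hgx.
  apply (improper_int_le _ _ _ (Rabs x + T) Hgx); intros D HD.
  pose proof (Rle_abs x); pose proof (Rle_abs (- x)); rewrite Rabs_Ropp in *.
  set (q := fun t => sech2 (t / mu) * gauss_density b (t - x)).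
  rewrite (RInt_split_at _ (fun y => x ^ 2 * (1 * q (1 * y + x))) (- x) D).
  - rewrite RInt_scal_R, RInt_comp_lin_R by (unfold q; ex_RInt_smooth).
    replace (1 * - x + x) with 0 by ring; replace (1 * D + x) with (x + D) by ring.
    rewrite <- (RInt_Chasles_R q 0 T) by (unfold q; ex_RInt_smooth).
    apply Rmult_le_compat_l; [apply pow2_ge_0|].
    apply Rplus_le_compat_l, RInt_sech2_gauss_le; auto; lra.
  - lra.
  - eapply ex_RInt_of_improper_int, Hgx.
  - intros y Hy; rewrite integrand_eq_0 by lra; ring.
  - intros y Hy; rewrite integrand_eq_sech2 by lra; unfold q.
    replace (1 * y + x - x) with y by ring; replace (1 * y + x) with (x + y) by ring; ring.
Qed.

Lemma continuous_RInt_sech2_gauss mu b T x :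
  continuous (fun x => RInt (fun t => sech2 (t / mu) * gauss_density b (t - x)) 0 T) x.
Proof.
  apply (continuous_RInt_param (fun t x => sech2 (t / mu) * gauss_density b (t - x))); intros t y.
  (* the factor 1 puts the kernel in the shape of [continuity_2d_pt_conv_kernel] *)
  apply continuity_2d_pt_ext with (f := fun t x => 1 * (sech2 (t / mu) * gauss_density b (t - x)));
    [intros; ring|].
  apply (continuity_2d_pt_swap (fun x t => 1 * (sech2 (t / mu) * gauss_density b (t - x)))).
  apply continuity_2d_pt_conv_kernel; intros; smooth.
Qed.

(* Fubini, then the Gaussian product formula turns the x-integral into a second moment. *)
Lemma RInt_iterated_truncated_le mu a b B T : 0 < mu -> 0 < a -> 0 < b -> 0 <= B -> 0 <= T ->
  RInt (fun x => x ^ 2 * gauss_density a x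
                 * RInt (fun t => sech2 (t / mu) * gauss_density b (t - x)) 0 T) (- B) B
  <= sech2_moment_bound mu a b.
Proof.
  intros Hmu Ha Hb HB HT.
  set (k := fun x t => x ^ 2 * gauss_density a x * (sech2 (t / mu) * gauss_density b (t - x))).
  assert (Hk : forall x t, continuity_2d_pt k x t)
    by (intros; apply continuity_2d_pt_conv_kernel; intros; smooth).
  rewrite (RInt_ext_R _ (fun x => RInt (fun t => k x t) 0 T)).
  2: { intros x _; unfold k; rewrite RInt_scal_R by ex_RInt_smooth; reflexivity. }
  rewrite RInt_swap_iterated by exact Hk.
  set (c0 := gauss_density (a + b) 0 * (a * b / (a + b))).
  set (c2 := gauss_density (a + b) 0 * (a / (a + b)) ^ 2).
  assert (Hs : 0 < gauss_density (a + b) 0) by (apply gauss_density_pos; lra).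
  assert (Hc0 : 0 <= c0) by (apply Rmult_le_pos; [lra|apply Rlt_le, Rdiv_lt_0_compat; nra]).
  assert (Hc2 : 0 <= c2) by (apply Rmult_le_pos; [lra|apply pow2_ge_0]).
  replace (sech2_moment_bound mu a b) with (c0 * mu + c2 * mu ^ 3)
    by (unfold sech2_moment_bound, c0, c2; ring).
  eapply Rle_trans; [|apply (RInt_sech2_quadratic_le mu T); auto].
  apply RInt_le_R; auto; [intros; apply continuous_RInt_param, Hk|intros; smooth|].
  intros t _.
  rewrite (RInt_ext_R _ (fun x => sech2 (t / mu) * (x ^ 2 * gauss_density a x * gauss_density b (t - x))))
    by (intros; unfold k; ring).
  rewrite RInt_scal_R by ex_RInt_smooth.
  apply Rmult_le_compat_l; [apply Rlt_le, sech2_pos|].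
  eapply Rle_trans; [apply RInt_sqr_gauss_mul_le; auto; lra|].
  unfold c0, c2; lra.
Qed.

Lemma RInt_outer_window_le mu a b g B T : 0 < mu -> 0 < a -> 0 < b -> 0 <= B -> 0 <= T ->
  (forall x, improper_int (fun y => integrand mu x y * gauss_density b y) (g x)) ->
  ex_RInt (fun x => g x * gauss_density a x) (- B) B ->
  RInt (fun x => g x * gauss_density a x) (- B) B
  <= sech2_moment_bound mu a b + gauss_density b 0 * mu * a * (1 - tanh (T / mu)).
Proof.
  intros Hmu Ha Hb HB HT Hg Hex.
  set (c := gauss_density b 0 * mu * (1 - tanh (T / mu))).
  assert (Hc : 0 <= c).
  { apply Rmult_le_pos; [apply Rmult_le_pos; [apply Rlt_le, gauss_density_pos|]|]; try lra.
    pose proof (tanh_le_1 (T / mu)); lra. }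
  apply Rle_trans with
    (RInt (fun x => x ^ 2 * gauss_density a x
                    * RInt (fun t => sech2 (t / mu) * gauss_density b (t - x)) 0 T
                    + c * (x ^ 2 * gauss_density a (x - 0))) (- B) B).
  - apply RInt_le; auto; [lra| |].
    + apply ex_RInt_of_continuous; intros z.
      apply (@continuous_plus R_UniformSpace R_AbsRing R_NormedModule); [|smooth].
      apply (@continuous_mult R_UniformSpace R_AbsRing); [smooth|].
      apply continuous_RInt_sech2_gauss.
    + intros x _; rewrite Rminus_0_r.
      pose proof (inner_expectation_le mu b x (g x) T Hmu Hb HT (Hg x)).
      pose proof (gauss_density_pos a x Ha).
      fold c in H; nra.
  - assert (HJ : ex_RInt (fun x => x ^ 2 * gauss_density a x
                     * RInt (fun t => sech2 (t / mu) * gauss_density b (t - x)) 0 T) (- B) B).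
    { apply ex_RInt_of_continuous; intros z.
      apply (@continuous_mult R_UniformSpace R_AbsRing); [smooth|apply continuous_RInt_sech2_gauss]. }
    rewrite RInt_plus_R, RInt_scal_R by (auto; ex_RInt_smooth).
    pose proof (RInt_iterated_truncated_le mu a b B T Hmu Ha Hb HB HT).
    pose proof (RInt_sqr_gauss_density_le a 0 (- B) B Ha ltac:(lra)).
    assert (c * RInt (fun x => x ^ 2 * gauss_density a (x - 0)) (- B) B <= c * a)
      by (apply Rmult_le_compat_l; auto; lra).
    unfold c in *; lra.
Qed.

Lemma le_of_le_add_tanh_tail E M c : 0 <= c ->
  (forall u, 0 <= u -> E <= M + c * (1 - tanh u)) -> E <= M.
Proof.
  intros Hc HE; apply Rle_plus_epsilon; intros eps Heps.
  assert (Hu : 0 <= c / eps) by (apply Rmult_le_pos; [lra|apply Rlt_le, Rinv_0_lt_compat, Heps]).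
  specialize (HE (c / eps) Hu).
  assert (c * (1 - tanh (c / eps)) <= c * (1 / (1 + c / eps)))
    by (apply Rmult_le_compat_l, one_sub_tanh_le; auto).
  assert (c * (1 / (1 + c / eps)) <= eps).
  { replace (c * (1 / (1 + c / eps))) with (eps * (c / (eps + c))) by (field; lra).
    assert (c / (eps + c) <= 1) by (apply Rle_div_l; lra).
    assert (eps * (c / (eps + c)) <= eps * 1) by (apply Rmult_le_compat_l; lra).
    lra. }
  lra.
Qed.

Lemma expectation_le_sech2_moment_bound mu a b g E : 0 < mu -> 0 < a -> 0 < b ->
  (forall x, improper_int (fun y => integrand mu x y * gauss_density b y) (g x)) ->
  improper_int (fun x => g x * gauss_density a x) E ->
  E <= sech2_moment_bound mu a b.
Proof.
  intros Hmu Ha Hb Hg HE.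
  apply (le_of_le_add_tanh_tail _ _ (gauss_density b 0 * mu * a)).
  { pose proof (gauss_density_pos b 0 Hb); apply Rmult_le_pos; nra. }
  intros u Hu; apply (improper_int_le _ _ _ 0 HE); intros B HB.
  replace u with (mu * u / mu) by (field; lra).
  apply RInt_outer_window_le; auto.
  - apply Rmult_le_pos; lra.
  - eapply ex_RInt_of_improper_int, HE.
Qed.

Lemma expectation_le_sech2_moment_bound_0_r mu a g E : 0 < mu -> 0 < a ->
  (forall x, g x = integrand mu x 0) ->
  improper_int (fun x => g x * gauss_density a x) E ->
  E <= sech2_moment_bound mu a 0.
Proof.
  intros Hmu Ha Hg HE.
  assert (Ha0 : 0 < gauss_density a 0) by (apply gauss_density_pos, Ha).
  replace (sech2_moment_bound mu a 0) with (0 * mu + gauss_density a 0 * mu ^ 3)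
    by (unfold sech2_moment_bound; rewrite Rplus_0_r; field; lra).
  apply (improper_int_le _ _ _ 0 HE); intros B HB.
  rewrite (RInt_split_at _ (fun x => gauss_density a x * (sech2 (x / mu) * x ^ 2)) 0 B).
  - eapply Rle_trans; [|apply (RInt_sech2_quadratic_le mu B); auto; lra].
    apply RInt_le_R; auto; try (intros; smooth).
    intros x _; pose proof (gauss_density_le_0 a x Ha); pose proof (sech2_pos (x / mu)).
    replace (sech2 (x / mu) * (0 + gauss_density a 0 * x ^ 2))
      with (gauss_density a 0 * (sech2 (x / mu) * x ^ 2)) by ring.
    apply Rmult_le_compat_r; [apply Rmult_le_pos; [lra|apply pow2_ge_0]|lra].
  - lra.
  - eapply ex_RInt_of_improper_int, HE.
  - intros x Hx; rewrite Hg, integrand_eq_0 by lra; ring.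
  - intros x Hx; rewrite Hg, integrand_eq_sech2, Rplus_0_r by lra; ring.
Qed.

Lemma sech2_moment_bound_0_l mu b : sech2_moment_bound mu 0 b = 0.
Proof. unfold sech2_moment_bound; unfold Rdiv; ring. Qed.

Lemma sech2_moment_bound_le mu a b : 0 < mu -> 0 <= a -> 0 < a + b ->
  sech2_moment_bound mu a b <=
  1 / sqrt (2 * PI) * (mu * a * b / (sqrt (a + b)) ^ 3)
  + 3 / (4 * sqrt (2 * PI)) * (a * mu ^ 3 / (sqrt (a + b)) ^ 5) * (3 * mu ^ 2 + 4 * a).
Proof.
  intros Hmu Ha Hab.
  assert (Hp : 0 < sqrt (2 * PI)) by (apply sqrt_lt_R0; pose proof PI_RGT_0; lra).
  assert (Hr : 0 < sqrt (a + b)) by (apply sqrt_lt_R0; lra).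
  assert (Hrr : sqrt (a + b) * sqrt (a + b) = a + b) by (apply sqrt_sqrt; lra).
  unfold sech2_moment_bound, gauss_density.
  rewrite sqrt_mult by (pose proof PI_RGT_0; lra).
  replace (- 0 ^ 2 / (2 * (a + b))) with 0 by (field; lra); rewrite exp_0.
  set (p := sqrt (2 * PI)) in *; set (r := sqrt (a + b)) in *.
  rewrite <- Hrr.
  match goal with |- ?L <= ?R =>
    replace R with (L + a * mu ^ 3 * (9 * mu ^ 2 + 8 * a) / (4 * p * r ^ 5)) by (field; lra) end.
  assert (0 <= a * mu ^ 3 * (9 * mu ^ 2 + 8 * a) / (4 * p * r ^ 5)).
  { apply Rmult_le_pos; [|apply Rlt_le, Rinv_0_lt_compat, Rmult_lt_0_compat; [lra|apply pow_lt, Hr]].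
    pose proof (pow_lt mu 3 Hmu); pose proof (pow2_ge_0 mu); apply Rmult_le_pos; nra. }
  lra.
Qed.

Theorem mainTheorem17 (mu sX2 sY2 : R) (g : R -> R) (E : R) :
  0 < mu -> 0 <= sX2 -> 0 <= sY2 -> 0 < sX2 + sY2 ->
  (forall x : R, gauss_expect sY2 (fun y => integrand mu x y) (g x)) ->
  gauss_expect sX2 g E ->
  E <= 1 / sqrt (2 * PI) * (mu * sX2 * sY2 / (sqrt (sX2 + sY2)) ^ 3)
       + 3 / (4 * sqrt (2 * PI)) * (sX2 * mu ^ 3 / (sqrt (sX2 + sY2)) ^ 5)
         * (3 * mu ^ 2 + 4 * sX2).
Proof.
  intros Hmu HX HY Hsum Hg HE.
  apply Rle_trans with (sech2_moment_bound mu sX2 sY2); [|apply sech2_moment_bound_le; auto].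
  destruct HE as [[HX0 ->]|[HXpos HE]].
  - subst sX2; rewrite sech2_moment_bound_0_l.
    destruct (Hg 0) as [[HY0 _]|[HYpos Hg0]]; [lra|].
    pose proof (inner_expectation_le mu sY2 0 (g 0) 0 Hmu HYpos (Rle_refl 0) Hg0); lra.
  - destruct (Req_dec sY2 0) as [HY0|HYpos].
    + subst sY2; apply (expectation_le_sech2_moment_bound_0_r mu sX2 g); auto.
      intros x; destruct (Hg x) as [[_ Hgx]|[Hc _]]; [exact Hgx|lra].
    + apply (expectation_le_sech2_moment_bound mu sX2 sY2 g); auto; [lra|].
      intros x; destruct (Hg x) as [[Hc _]|[_ Hgx]]; [lra|exact Hgx].
Qed.
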